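(* Let $\mathbb{F}_2=\pi_1(\mathbb{C}\setminus\{-1,1\},0)$ be the free group on generators $a_1,a_2$. For $Y>0$ let $N^{\mathcal{L}_-}_{\mathcal{PB}_3}(Y)$ be the number of reduced words $w\in\mathbb{F}_2$, $w\neq \mathrm{Id}$, with $\mathcal{L}_-(w)\le Y$. Then for every $Y>0$, $$N^{\mathcal{L}_-}_{\mathcal{PB}_3}(Y)\le \tfrac12 e^{3Y}.$$
   Context: Write a reduced word $w\in\mathbb{F}_2$ as $w=a_{j_1}^{k_1}a_{j_2}^{k_2}\cdots$ with consecutive $j_i$ different and $k_i\neq0$; the factors $a_{j_i}^{k_i}$ are the terms of $w$. The syllables of $w$ are: each term with $|k_i|\ge2$ (syllable of first type), and each maximal sequence of consecutive terms with $|k_i|=1$ all having the same sign of exponent (syllable of second type). This gives a unique decomposition of $w$ into syllables. The degree of a syllable is the sum of the absolute values of the exponents of its terms. For $w\ne\mathrm{Id}$, $\mathcal{L}_-(w)=\sum_k\log(3d_k)$, where the sum runs over the degrees $d_k$ of all syllables of $w$. *)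

From Stdlib Require Import Reals ZArith List Bool.
Import ListNotations.
Open Scope R_scope.

(* A term a_j^k of a reduced word in F_2 = <a_1, a_2>: the generator index
   is encoded by a bool (true = a_1, false = a_2) and k : Z is the exponent. *)
Definition term := (bool * Z)%type.

Fixpoint alternating (w : list term) : Prop :=
  match w with
  | t1 :: ((t2 :: _) as w') => fst t1 <> fst t2 /\ alternating w'
  | _ => True
  end.

(* A reduced word, written as its list of terms a_{j_1}^{k_1} a_{j_2}^{k_2} ...
   (this is a bijection with F_2; the identity is the empty list). *)
Definition reduced_word (w : list term) : Prop :=
  Forall (fun t => snd t <> 0%Z) w /\ alternating w.

(* Decomposition into syllables: each term with |k| >= 2 is a syllable
   (first type); maximal runs of consecutive terms with |k| = 1 and the same
   sign of exponent form a syllable (second type). *)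
Fixpoint syllables (w : list term) : list (list term) :=
  match w with
  | [] => []
  | t :: w' =>
      let ss := syllables w' in
      if (2 <=? Z.abs (snd t))%Z then [t] :: ss
      else match ss with
           | (t' :: r) :: ss' =>
               if (Z.abs (snd t') =? 1)%Z && (Z.sgn (snd t') =? Z.sgn (snd t))%Z
               then (t :: t' :: r) :: ss'
               else [t] :: ss
           | _ => [t] :: ss
           end
  end.

Definition syl_degree (s : list term) : Z :=
  fold_right (fun t acc => (Z.abs (snd t) + acc)%Z) 0%Z s.

Definition L_minus (w : list term) : R :=
  fold_right (fun s acc => ln (3 * IZR (syl_degree s)) + acc) 0 (syllables w).

(** Weight a syllable of degree [d] by [(3d)^-3] and a word by the product of
    the weights of its syllables; this is [exp (-3 L_-(w)) >= exp (-3Y)] when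
    [L_-(w) <= Y].  A syllable is a single power [a_j^k] with [|k| >= 2] or an
    alternating run of [a_1^(+-1)], [a_2^(+-1)] of constant sign, so there are 4
    syllables of degree 1 and 8 of each degree [d >= 2], of total weight
    [s <= 4/27 + 8/27 * sum_(d>=2) d^-3 <= 1/3].  A word is determined by its
    sequence of syllables, so the nontrivial words have total weight at most
    [sum_(n>=1) s^n = s/(1-s) <= 1/2], and at most [exp (3Y) / 2] of them can
    have weight [>= exp (-3Y)]. *)

From Stdlib Require Import Reals ZArith List Lia Lra Bool FinFun.
Import ListNotations.
Open Scope R_scope.

Definition sumR {A} (f : A -> R) (l : list A) : R :=
  fold_right (fun x acc => f x + acc) 0 l.

Definition prodR {A} (f : A -> R) (l : list A) : R :=
  fold_right (fun x acc => f x * acc) 1 l.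

Section ListSums.
Context {A : Type} (f : A -> R).

Lemma sumR_app l1 l2 : sumR f (l1 ++ l2) = sumR f l1 + sumR f l2.
Proof. induction l1; simpl; [lra | rewrite IHl1; lra]. Qed.

Lemma sumR_mull c l : sumR (fun x => c * f x) l = c * sumR f l.
Proof. induction l; simpl; [lra | rewrite IHl; lra]. Qed.

Lemma sumR_const l c : (forall x, In x l -> f x = c) -> sumR f l = INR (length l) * c.
Proof.
  induction l as [|a l IH]; intros Hc; [simpl; lra|].
  rewrite length_cons, S_INR; simpl.
  rewrite (Hc a (or_introl eq_refl)), IH by (intros; apply Hc; right; auto); lra.
Qed.

Lemma sumR_ge_length_mul l c : (forall x, In x l -> c <= f x) -> INR (length l) * c <= sumR f l.
Proof.
  induction l as [|a l IH]; intros Hc; [simpl; lra|].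
  rewrite length_cons, S_INR; simpl.
  pose proof (Hc a (or_introl eq_refl)).
  enough (INR (length l) * c <= sumR f l) by lra.
  apply IH; intros; apply Hc; right; auto.
Qed.

Hypothesis f_nonneg : forall x, 0 <= f x.

Lemma sumR_nonneg l : 0 <= sumR f l.
Proof. induction l; simpl; [lra | specialize (f_nonneg a); lra]. Qed.

Lemma prodR_nonneg l : 0 <= prodR f l.
Proof. induction l; simpl; [lra | specialize (f_nonneg a); nra]. Qed.

Lemma sumR_le_incl l l' : NoDup l -> incl l l' -> sumR f l <= sumR f l'.
Proof.
  revert l'; induction l as [|a l IH]; intros l' Hnd Hincl; [apply sumR_nonneg|].
  apply NoDup_cons_iff in Hnd as [Hna Hnd].
  destruct (in_split a l') as [l1 [l2 ->]]; [apply Hincl; left; auto|].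
  assert (Hrem : sumR f l <= sumR f (l1 ++ l2)).
  { apply IH; [exact Hnd|]. intros x Hx.
    destruct (in_app_or _ _ _ (Hincl x (or_intror Hx))) as [H | [-> | H]];
      [apply in_or_app; auto | contradiction | apply in_or_app; auto]. }
  rewrite sumR_app in Hrem |- *; simpl; lra.
Qed.

End ListSums.

Lemma length_mul_le_sumR {A B} (g : B -> R) (h : A -> B) (ws : list A) (W : list B) (c : R) :
  (forall y, 0 <= g y) -> Injective h -> NoDup ws ->
  (forall w, In w ws -> In (h w) W /\ c <= g (h w)) ->
  INR (length ws) * c <= sumR g W.
Proof.
  intros Hg Hh Hnd Hws.
  rewrite <- (length_map h).
  apply Rle_trans with (sumR g (map h ws)).
  - apply sumR_ge_length_mul. intros y Hy.
    apply in_map_iff in Hy as [w [<- Hw]]. apply Hws, Hw.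
  - apply sumR_le_incl; [exact Hg | apply Injective_map_NoDup; auto |].
    intros y Hy. apply in_map_iff in Hy as [w [<- Hw]]. apply Hws, Hw.
Qed.

Lemma exists_upper_bound {A} (f : A -> nat) (l : list A) : exists N, forall x, In x l -> (f x <= N)%nat.
Proof.
  induction l as [|a l [N HN]]; [exists 0%nat; intros _ []|].
  exists (Nat.max (f a) N). intros x [<- | Hx]; [lia | specialize (HN x Hx); lia].
Qed.

Section Words.
Context {A : Type} (f : A -> R).

Definition prepend_all (L : list A) (W : list (list A)) : list (list A) :=
  flat_map (fun a => map (cons a) W) L.

Fixpoint words_upto (L : list A) (n : nat) : list (list A) :=
  match n with
  | O => [[]]
  | S m => [] :: prepend_all L (words_upto L m)
  end.

Lemma In_prepend_all L W a u : In a L -> In u W -> In (a :: u) (prepend_all L W).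
Proof. intros Ha Hu. apply in_flat_map. exists a. split; [exact Ha | apply in_map, Hu]. Qed.

Lemma In_words_upto L n u : incl u L -> (length u <= n)%nat -> In u (words_upto L n).
Proof.
  revert u; induction n as [|n IH]; intros [|a u] Hu Hlen; simpl in Hlen |- *;
    [left; reflexivity | lia | left; reflexivity | right].
  apply In_prepend_all; [apply Hu; left; auto|].
  apply IH; [intros x Hx; apply Hu; right; auto | lia].
Qed.

Lemma sumR_prodR_prepend_all L W :
  sumR (prodR f) (prepend_all L W) = sumR f L * sumR (prodR f) W.
Proof.
  induction L as [|a L IH]; simpl; [lra|].
  rewrite sumR_app, IH.
  replace (sumR (prodR f) (map (cons a) W)) with (f a * sumR (prodR f) W); [lra|].
  rewrite <- sumR_mull. clear IH.
  induction W as [|u W IHW]; simpl; [reflexivity | now rewrite IHW].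
Qed.

Hypothesis f_nonneg : forall x, 0 <= f x.

Lemma sumR_prodR_words_upto_le L n :
  sumR f L < 1 -> sumR (prodR f) (words_upto L n) <= / (1 - sumR f L).
Proof.
  set (s := sumR f L). intros Hs.
  assert (Hs0 : 0 <= s) by apply sumR_nonneg, f_nonneg.
  assert (Hinv : / (1 - s) * (1 - s) = 1) by (field; lra).
  assert (0 < / (1 - s)) by (apply Rinv_0_lt_compat; lra).
  induction n as [|n IH]; simpl; [nra|].
  rewrite sumR_prodR_prepend_all. fold s. nra.
Qed.

Lemma sumR_prodR_nonempty_words_le L n :
  sumR f L <= 1/3 -> sumR (prodR f) (prepend_all L (words_upto L n)) <= 1/2.
Proof.
  intros Hs. rewrite sumR_prodR_prepend_all.
  pose proof (sumR_nonneg f f_nonneg L).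
  pose proof (sumR_prodR_words_upto_le L n ltac:(lra)).
  pose proof (sumR_nonneg _ (prodR_nonneg f f_nonneg) (words_upto L n)).
  assert (/ (1 - sumR f L) <= 3/2).
  { rewrite <- (Rinv_inv (3/2)). apply Rinv_le_contravar; lra. }
  nra.
Qed.

End Words.

Fixpoint run (g : bool) (e : Z) (n : nat) : list term :=
  match n with
  | O => []
  | S n' => (g, e) :: run (negb g) e n'
  end.

Inductive syllable : list term -> Prop :=
  | syllable_power g k : (2 <= Z.abs k)%Z -> syllable [(g, k)]
  | syllable_run g e n : Z.abs e = 1%Z -> syllable (run g e (S n)).

Lemma concat_syllables w : concat (syllables w) = w.
Proof.
  induction w as [|t w IH]; simpl; [reflexivity|].
  destruct (2 <=? Z.abs (snd t))%Z; simpl; [now rewrite IH|].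
  destruct (syllables w) as [|[|t' r] ss'] eqn:E; simpl in *; try now rewrite IH.
  destruct (_ && _); simpl; now rewrite IH.
Qed.

Lemma syllables_injective : Injective syllables.
Proof. intros w1 w2 E. now rewrite <- (concat_syllables w1), E, concat_syllables. Qed.

Lemma reduced_word_cons_inv t w : reduced_word (t :: w) -> snd t <> 0%Z /\ reduced_word w.
Proof.
  intros [Hnz Halt]. inversion Hnz; subst.
  repeat split; auto. destruct w; simpl in *; tauto.
Qed.

Lemma Forall_syllable_syllables w : reduced_word w -> Forall syllable (syllables w).
Proof.
  induction w as [|[g k] w IH]; intros Hw; simpl; [constructor|].
  destruct (reduced_word_cons_inv _ _ Hw) as [Hk Hw']; simpl in Hk.
  specialize (IH Hw').
  destruct (2 <=? Z.abs k)%Z eqn:Ek; [constructor; [constructor; lia | exact IH]|].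
  assert (Hk1 : Z.abs k = 1%Z) by lia.
  assert (Hsingle : syllable [(g, k)]) by exact (syllable_run g k 0 Hk1).
  destruct (syllables w) as [|[|t' r] ss'] eqn:E; [now constructor | now constructor|].
  destruct (_ && _) eqn:Emerge; [|now constructor].
  apply andb_true_iff in Emerge as [Habs Hsgn].
  apply Z.eqb_eq in Habs; apply Z.eqb_eq in Hsgn.
  inversion IH as [|? ? Hsyl Hss]; subst.
  constructor; [|exact Hss].
  inversion Hsyl as [g' k' Hk' | g' e n He]; subst; simpl in Habs; [lia|].
  simpl in Hsgn. assert (e = k) as -> by lia.
  (* the first term of [w] is [(g', k)], so alternation forces [g' = negb g] *)
  destruct Hw as [_ Halt]. rewrite <- (concat_syllables w), E in Halt.
  destruct Halt as [Hg _]; simpl in Hg.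
  replace g' with (negb g) by (destruct g, g'; simpl; congruence).
  exact (syllable_run g k (S n) Hk1).
Qed.

Lemma syl_degree_app s1 s2 : syl_degree (s1 ++ s2) = (syl_degree s1 + syl_degree s2)%Z.
Proof. induction s1 as [|t s1 IH]; simpl; [reflexivity|]. unfold syl_degree in *; simpl; lia. Qed.

Lemma syl_degree_nonneg s : (0 <= syl_degree s)%Z.
Proof. induction s; unfold syl_degree in *; simpl; lia. Qed.

Lemma syl_degree_run g e n : Z.abs e = 1%Z -> syl_degree (run g e n) = Z.of_nat n.
Proof.
  intros He. revert g; induction n as [|n IH]; intros g; [reflexivity|].
  unfold syl_degree in *; simpl. rewrite IH; lia.
Qed.

Lemma syllable_degree_pos s : syllable s -> (1 <= syl_degree s)%Z.
Proof.
  intros [g k Hk | g e n He]; [unfold syl_degree; simpl; lia|].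
  rewrite syl_degree_run by exact He; lia.
Qed.

Lemma syl_degree_le_concat ss s : In s ss -> (syl_degree s <= syl_degree (concat ss))%Z.
Proof.
  induction ss as [|s' ss IH]; intros Hs; [destruct Hs|]; simpl; rewrite syl_degree_app.
  pose proof (syl_degree_nonneg s'); pose proof (syl_degree_nonneg (concat ss)).
  destruct Hs as [<- | Hs]; [lia | specialize (IH Hs); lia].
Qed.

Lemma length_le_syl_degree_concat ss :
  Forall syllable ss -> (Z.of_nat (length ss) <= syl_degree (concat ss))%Z.
Proof.
  induction 1 as [|s ss Hs _ IH]; [simpl; lia|].
  rewrite length_cons; simpl; rewrite syl_degree_app.
  pose proof (syllable_degree_pos s Hs); lia.
Qed.

Definition syllables_of_degree (d : nat) : list (list term) :=
  [run true 1 d; run false 1 d; run true (-1) d; run false (-1) d] ++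
  if (2 <=? d)%nat
  then [[(true, Z.of_nat d)]; [(false, Z.of_nat d)];
        [(true, (- Z.of_nat d)%Z)]; [(false, (- Z.of_nat d)%Z)]]
  else [].

Definition syllables_upto (N : nat) : list (list term) :=
  flat_map syllables_of_degree (seq 1 N).

Lemma syl_degree_syllables_of_degree d s :
  In s (syllables_of_degree d) -> syl_degree s = Z.of_nat d.
Proof.
  unfold syllables_of_degree. intros Hs.
  destruct (in_app_or _ _ _ Hs) as [Hrun | Hpow].
  - repeat destruct Hrun as [<- | Hrun]; try destruct Hrun; apply syl_degree_run; reflexivity.
  - destruct (2 <=? d)%nat; [|destruct Hpow].
    repeat destruct Hpow as [<- | Hpow]; try destruct Hpow; unfold syl_degree; simpl; lia.
Qed.

Lemma syllable_In_syllables_of_degree s :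
  syllable s -> In s (syllables_of_degree (Z.to_nat (syl_degree s))).
Proof.
  intros Hs. unfold syllables_of_degree. apply in_or_app.
  destruct Hs as [g k Hk | g e n He].
  - right. replace (syl_degree [(g, k)]) with (Z.abs k) by (unfold syl_degree; simpl; lia).
    replace (2 <=? Z.to_nat (Z.abs k))%nat with true by (symmetry; apply Nat.leb_le; lia).
    set (d := Z.to_nat (Z.abs k)).
    assert (Hk' : k = Z.of_nat d \/ k = (- Z.of_nat d)%Z) by lia.
    clearbody d. destruct g, Hk' as [-> | ->]; simpl; tauto.
  - left. rewrite syl_degree_run, Nat2Z.id by exact He.
    assert (He' : e = 1%Z \/ e = (-1)%Z) by lia.
    destruct g, He' as [-> | ->]; cbn [In]; tauto.
Qed.

Lemma syllable_In_syllables_upto s N :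
  syllable s -> (Z.to_nat (syl_degree s) <= N)%nat -> In s (syllables_upto N).
Proof.
  intros Hs HN. apply in_flat_map. exists (Z.to_nat (syl_degree s)).
  split; [apply in_seq; pose proof (syllable_degree_pos s Hs); lia|].
  apply syllable_In_syllables_of_degree, Hs.
Qed.

Definition syllable_weight (s : list term) : R := exp (-3 * ln (3 * IZR (syl_degree s))).

Lemma word_weight_eq w : prodR syllable_weight (syllables w) = exp (-3 * L_minus w).
Proof.
  unfold L_minus. induction (syllables w) as [|s ss IH]; simpl.
  - now rewrite Rmult_0_r, exp_0.
  - rewrite IH. unfold syllable_weight. rewrite <- exp_plus. f_equal. ring.
Qed.

Lemma exp_mul3_ln x : 0 < x -> exp (-3 * ln x) = / x ^ 3.
Proof.
  intros Hx. replace (-3 * ln x) with (- (INR 3 * ln x)) by (simpl; ring).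
  now rewrite exp_Ropp, <- ln_pow, exp_ln by (try apply pow_lt; exact Hx).
Qed.

Lemma sumR_weight_syllables_of_degree d : (0 < d)%nat ->
  sumR syllable_weight (syllables_of_degree d) = (if (2 <=? d)%nat then 8 else 4) / 27 / INR d ^ 3.
Proof.
  intros Hd. assert (0 < INR d) by (apply lt_0_INR; exact Hd).
  rewrite (sumR_const _ _ (/ (3 * INR d) ^ 3)).
  - unfold syllables_of_degree. destruct (2 <=? d)%nat; simpl; field; lra.
  - intros s Hs. unfold syllable_weight.
    rewrite (syl_degree_syllables_of_degree d s Hs), <- INR_IZR_INZ.
    apply exp_mul3_ln; lra.
Qed.

Lemma inv_cube_le_telescope a : 0 < a -> 2 / (a + 1) ^ 3 <= / a ^ 2 - / (a + 1) ^ 2.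
Proof.
  intros Ha.
  assert (Hdiff : / a ^ 2 - / (a + 1) ^ 2 - 2 / (a + 1) ^ 3 = (3 * a + 1) / (a ^ 2 * (a + 1) ^ 3))
    by (field; lra).
  enough (0 <= (3 * a + 1) / (a ^ 2 * (a + 1) ^ 3)) by lra.
  apply Rle_mult_inv_pos; [lra | apply Rmult_lt_0_compat; apply pow_lt; lra].
Qed.

Lemma syllables_upto_S N : syllables_upto (S N) = syllables_upto N ++ syllables_of_degree (S N).
Proof.
  unfold syllables_upto. rewrite seq_S, flat_map_app; simpl.
  now rewrite app_nil_r.
Qed.

Lemma sumR_weight_syllables_upto_S n :
  sumR syllable_weight (syllables_upto (S n)) <= 8/27 - 4/27 / INR (S n) ^ 2.
Proof.
  induction n as [|n IH].
  - rewrite syllables_upto_S, sumR_app, sumR_weight_syllables_of_degree by lia. simpl; lra.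
  - rewrite syllables_upto_S, sumR_app, sumR_weight_syllables_of_degree by lia.
    replace (2 <=? S (S n))%nat with true by (symmetry; apply Nat.leb_le; lia).
    rewrite (S_INR (S n)) in *.
    pose proof (inv_cube_le_telescope (INR (S n)) (lt_0_INR _ (Nat.lt_0_succ n))).
    unfold Rdiv in *. lra.
Qed.

Lemma sumR_weight_syllables_upto_le N : sumR syllable_weight (syllables_upto N) <= 1/3.
Proof.
  destruct N as [|n]; [simpl; lra|].
  pose proof (sumR_weight_syllables_upto_S n).
  enough (0 <= 4/27 / INR (S n) ^ 2) by lra.
  apply Rle_mult_inv_pos; [lra | apply pow_lt, lt_0_INR; lia].
Qed.

Lemma syllables_In_nonempty_words w N :
  reduced_word w -> w <> [] -> (Z.to_nat (syl_degree w) <= N)%nat ->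
  In (syllables w) (prepend_all (syllables_upto N) (words_upto (syllables_upto N) N)).
Proof.
  intros Hw Hne HN.
  pose proof (Forall_syllable_syllables w Hw) as Hsyl.
  pose proof (length_le_syl_degree_concat _ Hsyl) as Hlen.
  assert (Hincl : incl (syllables w) (syllables_upto N)).
  { intros s Hs. apply syllable_In_syllables_upto; [exact (proj1 (Forall_forall _ _) Hsyl s Hs)|].
    pose proof (syl_degree_le_concat _ _ Hs); pose proof (syl_degree_nonneg s).
    rewrite concat_syllables in *; lia. }
  rewrite concat_syllables in Hlen.
  destruct (syllables w) as [|s ss] eqn:E.
  - rewrite <- (concat_syllables w), E in Hne. contradiction.
  - apply In_prepend_all; [apply Hincl; left; reflexivity|].
    apply In_words_upto; [intros x Hx; apply Hincl; right; exact Hx|].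
    rewrite length_cons in Hlen; lia.
Qed.

Theorem lemma1 :
  forall (Y : R), 0 < Y ->
  forall ws : list (list term),
    NoDup ws ->
    (forall w, In w ws -> reduced_word w /\ w <> nil /\ L_minus w <= Y) ->
    INR (length ws) <= exp (3 * Y) / 2.
Proof.
  intros Y _ ws Hnd Hws.
  destruct (exists_upper_bound (fun w => Z.to_nat (syl_degree w)) ws) as [N HN].
  set (Syl := syllables_upto N).
  assert (Hcount : INR (length ws) * exp (-3 * Y) <= 1/2).
  { apply Rle_trans with (sumR (prodR syllable_weight) (prepend_all Syl (words_upto Syl N))).
    - apply (length_mul_le_sumR _ syllables).
      + intros ss; apply prodR_nonneg; intros s; apply Rlt_le, exp_pos.
      + exact syllables_injective.
      + exact Hnd.
      + intros w Hw. destruct (Hws w Hw) as [Hred [Hne HL]]. split.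
        * exact (syllables_In_nonempty_words w N Hred Hne (HN w Hw)).
        * rewrite word_weight_eq.
          destruct (Req_dec (L_minus w) Y) as [-> | Hlt]; [right; reflexivity|].
          left; apply exp_increasing; lra.
    - apply sumR_prodR_nonempty_words_le; [intros s; apply Rlt_le, exp_pos|].
      apply sumR_weight_syllables_upto_le. }
  replace (-3 * Y) with (- (3 * Y)) in Hcount by ring. rewrite exp_Ropp in Hcount.
  pose proof (exp_pos (3 * Y)).
  apply Rmult_le_compat_r with (r := exp (3 * Y)) in Hcount; [|lra].
  rewrite Rmult_assoc, Rinv_l in Hcount by lra. lra.
Qed.
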